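(* Let $k\ge2$, $n,m\ge0$, and $M=k^m$. Let $F$ be a strategy for $k^n$ labeled chips at the root whose stable configuration is the permutation $\tau\in S_{k^n}$, and for each $i\in\{1,\dots,k^n\}$ let $F_i$ be a strategy for $k^m$ labeled chips at the root whose stable configuration is $\gamma_i\in S_{k^m}$. Start with $k^{n+m}$ chips labeled $1,\dots,k^{n+m}$ at the root. First perform the $F$-bundle with $M$ groups: for each $j\in\{1,\dots,M\}$, apply $F$ (via order-isomorphism) to the group of chips $\{j, M+j, 2M+j,\dots,(k^n-1)M+j\}$, using only vertices on layers $1,\dots,n$. Then, for each $i$, apply $F_i$ (via order-isomorphism, transported to the subtree) to the $k^m$ chips now on the $i$-th leftmost vertex of layer $n+1$, within the subtree rooted at that vertex. Then the resulting stable configuration is the inflation $\tau[\gamma_1,\dots,\gamma_{k^n}]$.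
   Context: Labeled chip-firing on the infinite rooted directed $k$-ary tree (each vertex has $k$ children ordered left to right, root on layer $1$, children of a layer-$t$ vertex on layer $t+1$): a vertex with at least $k$ chips may fire by choosing any $k$ of its chips and sending the $i$-th smallest label among them to its $i$-th leftmost child. A strategy is a sequence of legal firings continued until the configuration is stable (no vertex has $\ge k$ chips). Starting with $k^p$ chips at the root, every stable configuration has exactly one chip on each vertex of layer $p+1$ and none elsewhere, and is identified with the permutation (or, for arbitrary distinct labels, the sequence) of labels read from left to right on layer $p+1$. Since firing depends only on the relative order of labels, a strategy for chips $1,\dots,N$ can be applied to any set of $N$ distinct labels by letting the chip with the $r$-th smallest label play the role of chip $r$ (application via order-isomorphism); similarly a strategy at the root can be transported to the same firings in the subtree rooted at any vertex. Inflation: for $\tau\in S_n$ and permutations $\gamma_1,\dots,\gamma_n$, the inflation $\tau[\gamma_1,\dots,\gamma_n]$ is the permutation of length $|\gamma_1|+\cdots+|\gamma_n|$ consisting of $n$ consecutive blocks, where the $i$-th block is order-isomorphic to $\gamma_i$ and every choice of one entry from each block yields a sequence order-isomorphic to $\tau$. *)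

From mathcomp Require Import all_boot.
Set Implicit Arguments. Unset Strict Implicit. Unset Printing Implicit Defensive.

(* A vertex of the infinite rooted k-ary tree is the path from the root:
   the sequence of child indices (0 = leftmost child, ..., k-1 = rightmost).
   The root is [::]; a vertex on layer t is a path of length t-1. *)
Definition vertex := seq nat.

Definition config := nat -> vertex.

(* A firing: a vertex together with the k chosen chips. *)
Definition firing := (vertex * seq nat)%type.

Definition legal_firing (k : nat) (chips : seq nat) (pos : config)
  (f : firing) : bool :=
  [&& uniq f.2, size f.2 == k & all (fun c => (c \in chips) && (pos c == f.1)) f.2].

Definition fire (pos : config) (f : firing) : config :=
  fun c => if c \in f.2 then rcons f.1 (index c (sort leq f.2)) else pos c.

Fixpoint legal_run (k : nat) (chips : seq nat) (pos : config)
  (fs : seq firing) : bool :=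
  match fs with
  | [::] => true
  | f :: fs' => legal_firing k chips pos f && legal_run k chips (fire pos f) fs'
  end.

Definition run (pos : config) (fs : seq firing) : config := foldl fire pos fs.

Definition stable (k : nat) (chips : seq nat) (pos : config) : Prop :=
  forall v : vertex, count (fun c => pos c == v) chips < k.

Definition is_strategy (k : nat) (chips : seq nat) (pos : config)
  (fs : seq firing) : Prop :=
  legal_run k chips pos fs /\ stable k chips (run pos fs).

Definition root_config : config := fun _ => [::].

(* layer_paths k t = the vertices of layer t+1 (paths of length t),
   listed from left to right. *)
Fixpoint layer_paths (k t : nat) : seq vertex :=
  match t with
  | 0 => [:: [::]]
  | t'.+1 => [seq rcons v i | v <- layer_paths k t', i <- iota 0 k]
  end.

(* The configuration pos of the chips has exactly one chip on each vertex of
   layer p+1 (and none elsewhere), and reading them left to right gives w. *)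
Definition reads_as (k p : nat) (chips : seq nat) (pos : config)
  (w : seq nat) : Prop :=
  [/\ perm_eq w chips, size w = k ^ p &
      forall i, i < k ^ p -> pos (nth 0 w i) = nth [::] (layer_paths k p) i].

(* Applying a strategy for chips 1..N to a set L of N distinct labels via
   order-isomorphism: chip r is played by the r-th smallest label of L. *)
Definition apply_oi (L : seq nat) (fs : seq firing) : seq firing :=
  [seq (f.1, [seq nth 0 (sort leq L) r.-1 | r <- f.2]) | f <- fs].

Definition transport (u : vertex) (fs : seq firing) : seq firing :=
  [seq (u ++ f.1, f.2) | f <- fs].

Definition group (M K j : nat) : seq nat := [seq i * M + j | i <- iota 0 K].

Definition bundle (k n m : nat) (F : seq firing) : seq firing :=
  flatten [seq apply_oi (group (k ^ m) (k ^ n) j) F | j <- iota 1 (k ^ m)].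

Definition stage2 (k n : nat) (chips : seq nat) (pos1 : config)
  (Fs : nat -> seq firing) : seq firing :=
  flatten [seq transport (nth [::] (layer_paths k n) i.-1)
             (apply_oi [seq c <- chips | pos1 c == nth [::] (layer_paths k n) i.-1]
                       (Fs i))
          | i <- iota 1 (k ^ n)].

Definition composite (k n m : nat) (F : seq firing) (Fs : nat -> seq firing)
  : seq firing :=
  let B := bundle k n m F in
  B ++ stage2 k n (iota 1 (k ^ (n + m))) (run root_config B) Fs.

Definition order_iso (s t : seq nat) : Prop :=
  size s = size t /\
  forall i j, i < size s -> j < size s ->
    (nth 0 s i < nth 0 s j) = (nth 0 t i < nth 0 t j).

(* The i-th consecutive block (0-based) of pi, blocks having the sizes of gs. *)
Definition block (gs : seq (seq nat)) (pi : seq nat) (i : nat) : seq nat :=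
  take (size (nth [::] gs i)) (drop (sumn (map size (take i gs))) pi).

(* pi is the inflation tau[gs_1, ..., gs_n] (definition via its defining
   property): pi is a permutation of length |gs_1|+...+|gs_n| made of n
   consecutive blocks, block i order-isomorphic to gs_i, and every choice of
   one entry from each block is order-isomorphic to tau. *)
Definition is_inflation (tau : seq nat) (gs : seq (seq nat)) (pi : seq nat)
  : Prop :=
  [/\ size tau = size gs,
      perm_eq pi (iota 1 (sumn (map size gs))),
      (forall i, i < size gs -> order_iso (block gs pi i) (nth [::] gs i)) &
      (forall f : nat -> nat,
         (forall i, i < size gs -> f i < size (nth [::] gs i)) ->
         order_iso [seq nth 0 (block gs pi i) (f i) | i <- iota 0 (size gs)] tau)].

From mathcomp Require Import all_boot zify.

Set Implicit Arguments.
Unset Strict Implicit.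
Unset Printing Implicit Defensive.

(* Running a strategy on chips relabelled by an order-preserving map, inside the
   subtree of a vertex u, moves every chip exactly as the original run does, with u
   prepended to its position; runs on disjoint sets of chips do not interact.  The
   bundle is such a family of copies of F, one per residue class j, so chip
   (r - 1) M + j ends where F sends chip r.  Reading tau off layer n + 1, the a-th
   vertex of that layer then holds exactly the block of labels
   (tau_a - 1) M + 1, ..., tau_a M; the second stage sends its x-th
   smallest chip, (tau_a - 1) M + x, to where F_(a+1) sends chip x.  Hence layer
   n + m + 1 reads, block after block, (tau_a - 1) M + gamma_(a+1), which is
   tau[gamma_1, ..., gamma_K]. *)

(* Ranks are 1-based, as in [apply_oi]; rank 0 is junk and gives the smallest element. *)
Definition nth_smallest (L : seq nat) (r : nat) : nat := nth 0 (sort leq L) r.-1.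

Lemma sort_leq_ltn_sorted (s : seq nat) : uniq s -> sorted ltn (sort leq s).
Proof.
by move=> s_uniq; rewrite ltn_sorted_uniq_leq sort_uniq s_uniq sort_sorted //; apply: leq_total.
Qed.

Lemma index_sorted_ltn (s : seq nat) c : sorted ltn s -> c \in s ->
  index c s = count (fun x => x < c) s.
Proof.
elim: s => // x s IHs /= s_path.
have x_min : all (ltn x) s by apply: order_path_min s_path; apply: ltn_trans.
rewrite in_cons; case: (eqVneq c x) => [-> _ | c_neq_x /= c_in].
  rewrite ltnn add0n (@eq_in_count _ _ pred0) ?count_pred0 // => y /(allP x_min) /ltnW.
  by rewrite ltnNge => ->.
have x_lt_c : x < c := allP x_min c c_in.
by rewrite x_lt_c IHs ?(path_sorted s_path) // eq_sym (negbTE c_neq_x).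
Qed.

Lemma index_sort_leq (s : seq nat) c : uniq s -> c \in s ->
  index c (sort leq s) = count (fun x => x < c) s.
Proof.
move=> s_uniq c_in; rewrite index_sorted_ltn ?mem_sort ?sort_leq_ltn_sorted //.
by apply/permP; rewrite perm_sort.
Qed.

Lemma map_nth_smallest L : map (nth_smallest L) (iota 1 (size L)) = sort leq L.
Proof.
rewrite -[RHS](mkseq_nth 0) size_sort -[1]/(1 + 0) iotaDl -map_comp.
by apply: eq_map => r; rewrite /= /nth_smallest add1n.
Qed.

Lemma nth_smallest_mono L : uniq L ->
  {in iota 1 (size L) &, {mono nth_smallest L : x y / x <= y}}.
Proof.
move=> L_uniq; apply: leq_mono_in => -[|x] [|y]; rewrite !mem_iota //= !add1n !ltnS.
move=> x_L y_L lt_xy.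
by apply: (sorted_ltn_nth ltn_trans 0 (sort_leq_ltn_sorted L_uniq)); rewrite ?inE ?size_sort.
Qed.

Lemma nth_smallest_sorted L r : sorted leq L -> nth_smallest L r = nth 0 L r.-1.
Proof. by move=> L_sorted; rewrite /nth_smallest sorted_sort //; apply: leq_trans. Qed.

Lemma nth_smallest_perm L L' : perm_eq L L' -> nth_smallest L =1 nth_smallest L'.
Proof.
by move/(perm_sortP leq_total leq_trans anti_leq) => eq_sort r; rewrite /nth_smallest eq_sort.
Qed.

Lemma mem_nth_smallest L r : r \in iota 1 (size L) -> nth_smallest L r \in L.
Proof. by move=> r_in; rewrite -(mem_sort leq) -map_nth_smallest map_f. Qed.

Lemma legal_run_cat k C pos fs1 fs2 :
  legal_run k C pos (fs1 ++ fs2) = legal_run k C pos fs1 && legal_run k C (run pos fs1) fs2.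
Proof. by elim: fs1 pos => //= f fs1 IHfs pos; rewrite IHfs andbA. Qed.

Lemma run_cat pos fs1 fs2 : run pos (fs1 ++ fs2) = run (run pos fs1) fs2.
Proof. exact: foldl_cat. Qed.

Definition embed (u : vertex) (phi : nat -> nat) (fs : seq firing) : seq firing :=
  [seq (u ++ f.1, map phi f.2) | f <- fs].

Lemma transport_apply_oi u L fs : transport u (apply_oi L fs) = embed u (nth_smallest L) fs.
Proof. by rewrite /transport /apply_oi -map_comp. Qed.

Lemma transport_nil fs : transport [::] fs = fs.
Proof. by rewrite /transport; elim: fs => //= -[v l] fs ->. Qed.

Section Embedding.

Variables (k : nat) (C C' : seq nat) (u : vertex) (phi : nat -> nat).
Hypothesis phi_mono : {in C &, {mono phi : x y / x <= y}}.
Hypothesis phi_C' : {in C, forall c, phi c \in C'}.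

(* A monotone relabelling preserves the rank of a chip among the fired ones, hence the
   child it is sent to. *)
Lemma fire_embed pos0 pos f :
    legal_firing k C pos0 f -> {in C, forall c, pos (phi c) = u ++ pos0 c} ->
  {in C, forall c, fire pos (u ++ f.1, map phi f.2) (phi c) = u ++ fire pos0 f c}.
Proof.
case/and3P=> f_uniq _ /allP f_at pos_embed c c_in; rewrite /fire /=.
have f_sub : {subset f.2 <= C} by move=> d /f_at /andP[].
have phi_inj := incn_inj_in phi_mono.
have -> : (phi c \in map phi f.2) = (c \in f.2).
  apply/mapP/idP => [[d d_f eq_phi] | c_f]; last by exists c.
  by rewrite (phi_inj c d c_in (f_sub d d_f) eq_phi).
case: ifP => c_f; last exact: pos_embed.
rewrite -rcons_cat !index_sort_leq ?(map_f phi) ?map_inj_in_uniq //.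
- congr rcons; rewrite count_map; apply: eq_in_count => d /f_sub d_in /=.
  exact: (leqW_mono_in phi_mono).
- by move=> x y /f_sub ? /f_sub ?; apply: phi_inj.
Qed.

Lemma legal_firing_embed pos0 pos f :
    legal_firing k C pos0 f -> {in C, forall c, pos (phi c) = u ++ pos0 c} ->
  legal_firing k C' pos (u ++ f.1, map phi f.2).
Proof.
case/and3P=> f_uniq f_size /allP f_at pos_embed.
have f_sub : {subset f.2 <= C} by move=> d /f_at /andP[].
rewrite /legal_firing /= size_map f_size map_inj_in_uniq ?f_uniq /=; last first.
  by move=> x y /f_sub ? /f_sub ?; apply: (incn_inj_in phi_mono).
apply/allP => _ /mapP[c c_f ->]; have /andP[c_in /eqP <-] := f_at c c_f.
by rewrite phi_C' // pos_embed ?eqxx.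
Qed.

Lemma run_embed pos0 pos fs :
    legal_run k C pos0 fs -> {in C, forall c, pos (phi c) = u ++ pos0 c} ->
  legal_run k C' pos (embed u phi fs) /\
  {in C, forall c, run pos (embed u phi fs) (phi c) = u ++ run pos0 fs c}.
Proof.
elim: fs pos0 pos => [|f fs IHfs] pos0 pos /=; first by [].
case/andP=> f_legal fs_legal pos_embed.
rewrite (legal_firing_embed f_legal pos_embed); exact: IHfs (fire_embed f_legal pos_embed).
Qed.

Lemma run_embed_frame pos0 pos fs d :
  legal_run k C pos0 fs -> d \notin map phi C -> run pos (embed u phi fs) d = pos d.
Proof.
move=> + d_out; elim: fs pos0 pos => [|f fs IHfs] pos0 pos //= /andP[f_legal fs_legal].
rewrite (IHfs _ _ fs_legal) /fire /=; case: ifP => // /mapP[c c_f d_eq].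
case/and3P: f_legal => _ _ /allP/(_ c c_f)/andP[c_in _].
by rewrite d_eq map_f in d_out.
Qed.

End Embedding.

Definition parallel (u : nat -> vertex) (L : nat -> seq nat) (fs : nat -> seq firing)
  (s : seq nat) : seq firing :=
  flatten [seq transport (u j) (apply_oi (L j) (fs j)) | j <- s].

Lemma parallel_cons u L fs j s :
  parallel u L fs (j :: s) = embed (u j) (nth_smallest (L j)) (fs j) ++ parallel u L fs s.
Proof. by rewrite /parallel /= transport_apply_oi. Qed.

Lemma run_parallel_frame k pos u L fs s d :
    {in s, forall j, legal_run k (iota 1 (size (L j))) root_config (fs j)} ->
    {in s, forall j, d \notin L j} ->
  run pos (parallel u L fs s) d = pos d.
Proof.
elim: s pos => // j s IHs pos fs_legal d_out.
have sub_s : {subset s <= j :: s} by move=> i i_s; rewrite inE i_s orbT.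
rewrite parallel_cons run_cat IHs; first last.
- by move=> i /sub_s; apply: d_out.
- by move=> i /sub_s; apply: fs_legal.
apply: run_embed_frame (fs_legal j (mem_head j s)) _.
by rewrite map_nth_smallest mem_sort d_out ?mem_head.
Qed.

Lemma run_parallel k C pos u L fs s :
    uniq s ->
    {in s, forall j, uniq (L j)} -> {in s, forall j, {subset L j <= C}} ->
    {in s &, forall j j' d, d \in L j -> d \in L j' -> j = j'} ->
    {in s, forall j, {in L j, forall d, pos d = u j}} ->
    {in s, forall j, legal_run k (iota 1 (size (L j))) root_config (fs j)} ->
  legal_run k C pos (parallel u L fs s) /\
  {in s, forall j, {in iota 1 (size (L j)), forall r,
     run pos (parallel u L fs s) (nth_smallest (L j) r) = u j ++ run root_config (fs j) r}}.
Proof.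
elim: s pos => // j s IHs pos /andP[j_notin s_uniq] L_uniq L_C L_disj L_at fs_legal.
have sub_s : {subset s <= j :: s} by move=> i i_s; rewrite inE i_s orbT.
have j_in := mem_head j s.
set pos1 := run pos (embed (u j) (nth_smallest (L j)) (fs j)).
have [legal_j pos1_j] : legal_run k C pos (embed (u j) (nth_smallest (L j)) (fs j)) /\
    {in iota 1 (size (L j)), forall r,
       pos1 (nth_smallest (L j) r) = u j ++ run root_config (fs j) r}.
  apply: run_embed (fs_legal j j_in) _ => [||r /mem_nth_smallest r_in].
  - exact: nth_smallest_mono (L_uniq j j_in).
  - by move=> r /mem_nth_smallest; apply: L_C.
  - by rewrite cats0 (L_at j j_in _ r_in).
have Lj_out : {in s, forall i, {in L i, forall d, d \notin L j}}.
  move=> i i_s d d_i; apply: contra j_notin => d_j.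
  by rewrite (L_disj j i j_in (sub_s i i_s) d d_j d_i).
have pos1_at : {in s, forall i, {in L i, forall d, pos1 d = u i}}.
  move=> i i_s d d_i; rewrite /pos1 (run_embed_frame _ _ (fs_legal j j_in)).
    exact: L_at (sub_s i i_s) _ d_i.
  by rewrite map_nth_smallest mem_sort (Lj_out i).
have [legal_s pos_s] := IHs pos1 s_uniq (sub_in1 sub_s L_uniq) (sub_in1 sub_s L_C)
  (sub_in2 sub_s L_disj) pos1_at (sub_in1 sub_s fs_legal).
split; first by rewrite parallel_cons legal_run_cat legal_j.
move=> i; rewrite parallel_cons run_cat inE => /predU1P[-> r r_in | /pos_s //].
rewrite (run_parallel_frame _ _ (sub_in1 sub_s fs_legal)) -/pos1 ?pos1_j // => i2 i2_s.
by apply/negP => /(Lj_out i2 i2_s); rewrite mem_nth_smallest.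
Qed.

Lemma uniq_map_inj_in (T1 T2 : eqType) (f : T1 -> T2) (s : seq T1) :
  uniq (map f s) -> {in s &, injective f}.
Proof.
elim: s => //= z s IHs /andP[fz_notin s_uniq] x y.
rewrite !inE => /predU1P[-> | x_s] /predU1P[-> | y_s] // eq_f.
- by move: fz_notin; rewrite eq_f map_f.
- by move: fz_notin; rewrite -eq_f map_f.
- exact: IHs.
Qed.

Lemma size_layer_paths k t : size (layer_paths k t) = k ^ t.
Proof. by elim: t => //= t IHt; rewrite size_allpairs IHt size_iota expnSr. Qed.

Lemma uniq_layer_paths k t : uniq (layer_paths k t).
Proof.
elim: t => //= t IHt; apply: allpairs_uniq => //; first exact: iota_uniq.
by move=> [v i] [w j] _ _ /= /rcons_inj[-> ->].
Qed.

Lemma layer_pathsD k n m :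
  layer_paths k (n + m) = [seq v ++ w | v <- layer_paths k n, w <- layer_paths k m].
Proof.
elim: m => [|m IHm].
  by rewrite addn0 allpairs1r; under eq_map do rewrite cats0; rewrite map_id.
rewrite addnS /= IHm; elim: (layer_paths k n) => //= v Ln IHn.
rewrite allpairs_cat IHn allpairs_mapl map_allpairs; congr (_ ++ _).
by apply: eq_allpairs => w i; rewrite rcons_cat.
Qed.

Lemma reads_asP k p C pos w :
  reads_as k p C pos w <-> perm_eq w C /\ map pos w = layer_paths k p.
Proof.
split=> [[w_C w_size w_pos] | [w_C w_map]].
  split=> //; apply: (@eq_from_nth _ [::]); rewrite size_map w_size ?size_layer_paths //.
  by move=> i i_lt; rewrite (nth_map 0) ?w_size // w_pos.
have w_size : size w = k ^ p by rewrite -(size_map pos) w_map size_layer_paths.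
split=> //; last by move=> i i_lt; rewrite -w_map (nth_map 0) ?w_size.
Qed.

Lemma reads_as_inj k p C pos w : reads_as k p C pos w -> {in C &, injective pos}.
Proof.
case/reads_asP=> w_C w_map x y x_C y_C.
by apply: (@uniq_map_inj_in _ _ pos w); rewrite ?w_map ?uniq_layer_paths ?(perm_mem w_C).
Qed.

Lemma reads_as_stable k p C pos w : 1 < k -> reads_as k p C pos w -> stable k C pos.
Proof.
move=> k_gt1 /reads_asP[w_C w_map] v; rewrite -(permP w_C).
have -> : count (fun c => pos c == v) w = count_mem v (map pos w) by rewrite count_map.
rewrite w_map count_uniq_mem ?uniq_layer_paths //; apply: leq_ltn_trans k_gt1; exact: leq_b1.
Qed.

Lemma perm_flatten_map (I : eqType) (T : eqType) (f g : I -> seq T) (s : seq I) :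
  {in s, forall i, perm_eq (f i) (g i)} -> perm_eq (flatten (map f s)) (flatten (map g s)).
Proof.
elim: s => //= i s IHs fg; rewrite perm_cat ?fg ?mem_head //.
by apply: IHs => j j_s; rewrite fg // inE j_s orbT.
Qed.

Definition shift_block (M t : nat) (g : seq nat) : seq nat := [seq t.-1 * M + x | x <- g].

(* tau[gs_1, ..., gs_K] when every gs_i is a permutation of length M. *)
Definition inflate (M : nat) (tau : seq nat) (gs : seq (seq nat)) : seq nat :=
  flatten [seq shift_block M (nth 0 tau i) (nth [::] gs i) | i <- iota 0 (size tau)].

Lemma ltn_shift_block M t t' x x' : 0 < t -> 0 < t' -> t != t' ->
  0 < x <= M -> 0 < x' <= M -> (t.-1 * M + x < t'.-1 * M + x') = (t < t').
Proof.
move=> t_gt0 t'_gt0 t_neq x_M x'_M.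
case: (ltngtP t t') => [lt_tt' | lt_t't | eq_tt']; last by rewrite eq_tt' eqxx in t_neq.
- have : t.-1.+1 * M <= t'.-1 * M by rewrite leq_mul2r; lia.
  rewrite mulSn; lia.
- have : t'.-1.+1 * M <= t.-1 * M by rewrite leq_mul2r; lia.
  rewrite mulSn; lia.
Qed.

Lemma iota_blocks M K :
  iota 1 (K * M) = flatten [seq shift_block M t (iota 1 M) | t <- iota 1 K].
Proof.
elim: K => // K IHK; rewrite mulSnr iotaD IHK -[K.+1]addn1 iotaD map_cat flatten_cat /=.
by rewrite cats0 /shift_block -iotaDl addnC.
Qed.

Lemma block_flatten gs ss i : map size ss = map size gs ->
  block gs (flatten ss) i = nth [::] ss i.
Proof.
rewrite /block; elim: gs ss i => [|g gs IHgs] [|s ss] [|i] //=.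
all: case=> size_s size_ss.
  by rewrite drop0 take_size_cat.
by rewrite addnC -drop_drop (drop_size_cat _ size_s); apply: IHgs.
Qed.

Lemma nth_perm_iota s N i : perm_eq s (iota 1 N) -> i < size s -> 0 < nth 0 s i <= N.
Proof.
by move=> s_perm i_lt; have := mem_nth 0 i_lt; rewrite (perm_mem s_perm) mem_iota add1n ltnS.
Qed.

Lemma order_iso_shift_block M t g : order_iso (shift_block M t g) g.
Proof.
split=> [|i j]; rewrite size_map // => i_lt j_lt.
by rewrite !(nth_map 0) // ltn_add2l.
Qed.

Section Inflation.

Variables (M : nat) (tau : seq nat) (gs : seq (seq nat)).
Local Notation K := (size tau).
Local Notation blocks := [seq shift_block M (nth 0 tau i) (nth [::] gs i) | i <- iota 0 K].
Hypothesis tau_perm : perm_eq tau (iota 1 K).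
Hypothesis gs_size : size gs = K.
Hypothesis gs_perm : forall i, i < K -> perm_eq (nth [::] gs i) (iota 1 M).

Lemma shape_blocks : map size blocks = map size gs.
Proof.
rewrite -map_comp -[in RHS](mkseq_nth [::] gs) gs_size -map_comp.
by apply: eq_map => i; apply: size_map.
Qed.

Lemma block_inflate i : i < K ->
  block gs (inflate M tau gs) i = shift_block M (nth 0 tau i) (nth [::] gs i).
Proof.
by move=> i_lt; rewrite block_flatten ?shape_blocks // (nth_map 0) ?size_iota // nth_iota.
Qed.

Lemma perm_inflate : perm_eq (inflate M tau gs) (iota 1 (K * M)).
Proof.
pose full_block t := shift_block M t (iota 1 M).
apply: (@perm_trans _ (flatten [seq full_block (nth 0 tau i) | i <- iota 0 K])).
  by apply: perm_flatten_map => i; rewrite mem_iota => i_lt; apply/perm_map/gs_perm.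
rewrite iota_blocks (map_comp full_block) -/(mkseq _ _) mkseq_nth.
exact/perm_flatten/perm_map.
Qed.

Lemma inflateP : is_inflation tau gs (inflate M tau gs).
Proof.
have sumn_gs : sumn (map size gs) = K * M.
  by rewrite -shape_blocks -size_flatten (perm_size perm_inflate) size_iota.
split; rewrite ?gs_size ?sumn_gs.
- by [].
- exact: perm_inflate.
- by move=> i i_lt; rewrite block_inflate //; apply: order_iso_shift_block.
move=> f f_lt; split=> [|i j]; rewrite !size_map size_iota // => i_lt j_lt.
rewrite !(nth_map 0) ?size_iota // !nth_iota // !add0n !block_inflate // !(nth_map 0) ?f_lt //.
have [-> | neq_ij] := eqVneq i j; first by rewrite !ltnn.
have tau_gt0 l : l < K -> 0 < nth 0 tau l by move=> /(nth_perm_iota tau_perm)/andP[].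
rewrite ltn_shift_block ?tau_gt0 ?(nth_perm_iota (gs_perm _)) ?f_lt //.
by rewrite nth_uniq // (perm_uniq tau_perm) iota_uniq.
Qed.

End Inflation.

Lemma eq_block_label M i i' j j' : 0 < j <= M -> 0 < j' <= M ->
  i * M + j = i' * M + j' -> i = i' /\ j = j'.
Proof.
move=> j_M j'_M eq_ij; have M_gt0 : 0 < M by lia.
have eq_ij' : i * M + j.-1 = i' * M + j'.-1 by lia.
have := congr1 (divn^~ M) eq_ij'; have := congr1 (modn^~ M) eq_ij'.
rewrite /= !modnMDl !modn_small ?divnMDl ?divn_small; lia.
Qed.

Lemma sorted_shift_block M t s : sorted leq s -> sorted leq (shift_block M t s).
Proof.
by move=> s_sorted; rewrite sorted_map; apply: sub_sorted s_sorted => x y /=; rewrite leq_add2l.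
Qed.

Section Composite.

Variables (k n m : nat) (F : seq firing) (tau : seq nat).
Variables (Fs : nat -> seq firing) (gamma : nat -> seq nat).

Local Notation K := (k ^ n).
Local Notation M := (k ^ m).
Local Notation C := (iota 1 (k ^ (n + m))).
Local Notation u a := (nth [::] (layer_paths k n) a).
Local Notation pos1 := (run root_config (bundle k n m F)).

Hypothesis k_gt0 : 0 < k.
Hypothesis F_legal : legal_run k (iota 1 K) root_config F.
Hypothesis tau_reads : reads_as k n (iota 1 K) (run root_config F) tau.
Hypothesis Fs_legal : forall i, 1 <= i <= K -> legal_run k (iota 1 M) root_config (Fs i).
Hypothesis gamma_reads :
  forall i, 1 <= i <= K -> reads_as k m (iota 1 M) (run root_config (Fs i)) (gamma i).

Let M_gt0 : 0 < M. Proof. by rewrite expn_gt0 k_gt0. Qed.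

Let C_blocks : C = flatten [seq shift_block M t (iota 1 M) | t <- iota 1 K].
Proof. by rewrite expnD iota_blocks. Qed.

Lemma nth_smallest_group j r : 1 <= r <= K -> nth_smallest (group M K j) r = r.-1 * M + j.
Proof.
move=> r_K; rewrite nth_smallest_sorted ?(nth_map 0) ?size_iota ?nth_iota; try lia.
rewrite sorted_map; apply: sub_sorted (iota_sorted 0 K) => x y /= le_xy.
by rewrite leq_add2r leq_mul2r le_xy orbT.
Qed.

Lemma bundle_run : legal_run k C root_config (bundle k n m F) /\
  forall r j, 1 <= r <= K -> 1 <= j <= M -> pos1 (r.-1 * M + j) = run root_config F r.
Proof.
have bundle_par : bundle k n m F = parallel (fun=> [::]) (group M K) (fun=> F) (iota 1 M).
  by congr flatten; apply: eq_map => j; rewrite transport_nil.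
have size_group j : size (group M K j) = K by rewrite size_map size_iota.
have [|||||legal_B pos_B] := run_parallel (k := k) (C := C) (pos := root_config)
  (u := fun=> [::]) (L := group M K) (fs := fun=> F) (iota_uniq 1 M).
- move=> j _; rewrite map_inj_uniq ?iota_uniq // => x y /eqP.
  by rewrite eqn_add2r eqn_pmul2r // => /eqP.
- move=> j; rewrite mem_iota => j_M d /mapP[i]; rewrite mem_iota expnD => i_K ->.
  have : i.+1 * M <= K * M by rewrite leq_mul2r; lia.
  rewrite mulSn mem_iota; lia.
- move=> j j'; rewrite !mem_iota => j_M j'_M d /mapP[i _ ->] /mapP[i' _].
  by case/eq_block_label; lia.
- by [].
- by move=> j _; rewrite size_group.
rewrite bundle_par; split=> // r j r_K j_M.
by rewrite -(nth_smallest_group j r_K) pos_B ?mem_iota ?size_group.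
Qed.

Lemma bundle_chips_at a : a < K ->
  perm_eq [seq c <- C | pos1 c == u a] (shift_block M (nth 0 tau a) (iota 1 M)).
Proof.
move=> a_K; have [_ pos1E] := bundle_run.
have /reads_asP[tau_C tau_map] := tau_reads.
have tau_a : nth 0 tau a \in iota 1 K.
  by rewrite -(perm_mem tau_C) mem_nth // (perm_size tau_C) size_iota.
have u_a : u a = run root_config F (nth 0 tau a).
  by rewrite -tau_map (nth_map 0) // (perm_size tau_C) size_iota.
apply: uniq_perm; first exact/filter_uniq/iota_uniq.
  by rewrite map_inj_uniq ?iota_uniq //; apply: addnI.
move=> d; rewrite mem_filter C_blocks; apply/andP/mapP => [[/eqP pos_d] | [x x_M ->]].
  case/flattenP=> _ /mapP[t t_K ->] /mapP[x x_M d_tx]; exists x => //.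
  move: t_K x_M pos_d; rewrite d_tx u_a !mem_iota => t_K x_M.
  by rewrite pos1E; [move/(reads_as_inj tau_reads) => -> // | lia | lia]; rewrite mem_iota.
move: (tau_a) x_M; rewrite !mem_iota => t_K x_M.
rewrite pos1E // u_a eqxx; split=> //; apply/flattenP.
by exists (shift_block M (nth 0 tau a) (iota 1 M)); apply: map_f; rewrite mem_iota.
Qed.

Lemma nth_smallest_chips_at a x : a < K -> 1 <= x <= M ->
  nth_smallest [seq c <- C | pos1 c == u a] x = (nth 0 tau a).-1 * M + x.
Proof.
move=> a_K x_M; rewrite (nth_smallest_perm (bundle_chips_at a_K)).
rewrite nth_smallest_sorted ?sorted_shift_block ?iota_sorted //.
by rewrite (nth_map 0) ?nth_iota ?size_iota; lia.
Qed.

Lemma composite_run : legal_run k C root_config (composite k n m F Fs) /\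
  forall a x, a < K -> 1 <= x <= M ->
    run root_config (composite k n m F Fs) ((nth 0 tau a).-1 * M + x) =
    u a ++ run root_config (Fs a.+1) x.
Proof.
have [legal_B _] := bundle_run.
have size_chips i : i \in iota 1 K -> size [seq c <- C | pos1 c == u i.-1] = M.
  rewrite mem_iota => i_K; rewrite (perm_size (bundle_chips_at _)) ?size_map ?size_iota //; lia.
have [|||||legal_S pos_S] := run_parallel (k := k) (C := C) (pos := pos1)
  (u := fun i => u i.-1) (L := fun i => [seq c <- C | pos1 c == u i.-1]) (fs := Fs)
  (iota_uniq 1 K).
- by move=> i _; apply/filter_uniq/iota_uniq.
- by move=> i _ d; rewrite mem_filter => /andP[].
- move=> i i'; rewrite !mem_iota => i_K i'_K d; rewrite !mem_filter.
  move=> /andP[/eqP pos_i _] /andP[/eqP pos_i' _].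
  have /eqP : u i.-1 = u i'.-1 by rewrite -pos_i -pos_i'.
  rewrite nth_uniq ?uniq_layer_paths ?size_layer_paths; lia.
- by move=> i _ d; rewrite mem_filter => /andP[/eqP].
- by move=> i i_K; rewrite size_chips //; apply: Fs_legal; rewrite -mem_iota.
rewrite /composite legal_run_cat legal_B; split=> // a x a_K x_M.
rewrite run_cat -nth_smallest_chips_at //; apply: (pos_S a.+1).
  by rewrite mem_iota; lia.
by rewrite size_chips mem_iota; lia.
Qed.

Local Notation gs := [seq gamma i | i <- iota 1 K].

Let size_tau : size tau = K.
Proof. by case: tau_reads. Qed.

Let tau_perm : perm_eq tau (iota 1 (size tau)).
Proof. by rewrite size_tau; case: tau_reads. Qed.

Lemma nth_gs a : a < K -> nth [::] gs a = gamma a.+1.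
Proof. by move=> a_K; rewrite (nth_map 0) ?size_iota // nth_iota // add1n. Qed.

Lemma perm_nth_gs a : a < size tau -> perm_eq (nth [::] gs a) (iota 1 M).
Proof.
rewrite size_tau => a_K; rewrite nth_gs //.
by case/reads_asP: (@gamma_reads a.+1 a_K).
Qed.

Lemma composite_inflation : is_inflation tau gs (inflate M tau gs).
Proof.
by apply: inflateP tau_perm _ perm_nth_gs; rewrite size_map size_iota size_tau.
Qed.

Lemma composite_reads :
  reads_as k (n + m) C (run root_config (composite k n m F Fs)) (inflate M tau gs).
Proof.
have [_ posE] := composite_run.
apply/reads_asP; split.
  by rewrite expnD -[X in iota 1 (X * _)]size_tau; apply: perm_inflate tau_perm perm_nth_gs.
rewrite layer_pathsD -[layer_paths k n](mkseq_nth [::]) size_layer_paths.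
rewrite /inflate map_flatten -!map_comp size_tau; congr flatten; apply/eq_in_map => a.
rewrite mem_iota /= => a_K; rewrite nth_gs //.
have /reads_asP[gamma_C <-] := @gamma_reads a.+1 a_K.
rewrite /shift_block -!map_comp; apply/eq_in_map => x.
by rewrite (perm_mem gamma_C) mem_iota /= => x_M; apply: posE.
Qed.

End Composite.

Theorem proposition4p1 (k n m : nat) (F : seq firing) (tau : seq nat)
  (Fs : nat -> seq firing) (gamma : nat -> seq nat) :
  2 <= k ->
  is_strategy k (iota 1 (k ^ n)) root_config F ->
  reads_as k n (iota 1 (k ^ n)) (run root_config F) tau ->
  (forall i, 1 <= i <= k ^ n ->
     is_strategy k (iota 1 (k ^ m)) root_config (Fs i) /\
     reads_as k m (iota 1 (k ^ m)) (run root_config (Fs i)) (gamma i)) ->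
  is_strategy k (iota 1 (k ^ (n + m))) root_config (composite k n m F Fs) /\
  exists pi : seq nat,
    reads_as k (n + m) (iota 1 (k ^ (n + m)))
      (run root_config (composite k n m F Fs)) pi /\
    is_inflation tau [seq gamma i | i <- iota 1 (k ^ n)] pi.
Proof.
move=> k_gt1 [F_legal _] tau_reads Fs_spec.
have k_gt0 : 0 < k by apply: ltnW.
have Fs_legal i (i_K : 1 <= i <= k ^ n) := (Fs_spec i i_K).1.1.
have gamma_reads i (i_K : 1 <= i <= k ^ n) := (Fs_spec i i_K).2.
have reads := composite_reads k_gt0 F_legal tau_reads Fs_legal gamma_reads.
have [legal _] := composite_run k_gt0 F_legal tau_reads Fs_legal.
split; first by split; last exact: reads_as_stable k_gt1 reads.
exists (inflate (k ^ m) tau [seq gamma i | i <- iota 1 (k ^ n)]); split=> //.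
exact: composite_inflation tau_reads gamma_reads.
Qed.
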